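(* Let $a,b\in\mathbb{M}_2$ with $0\le a,b\le 1$, $a\ne0,1$ and $b\neq 0,1$. Then $a$ and $b$ are strict, absolutely compatible and satisfy $ab\ne ba$ if, and only if, the following three properties hold: (1) $\det(a)>0$ and $\det(b)>0$; (2) $\operatorname{trace}(a)=1=\operatorname{trace}(b)$; (3) $\det(a\circ b)=0$.
   Context: $\mathbb{M}_2$ is the algebra of $2\times2$ complex matrices; $\operatorname{trace}$ is the non-normalized trace. For $x\in\mathbb{M}_2$, $|x|=(x^*x)^{1/2}$; $a\circ b=\frac12(ab+ba)$. Elements $0\le a,b\le 1$ are absolutely compatible if $|a-b|+|1-a-b|=1$. For positive $x$, $r(x)$ is its range projection. For $0\le a\le 1$: $s(a)=1-r(1-a)$ and $n(a)=1-r(a)$; a non-zero $0\le a\le 1$ is strict if $s(a)=0=n(a)$. *)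

(* Scalars: an arbitrary numClosedFieldType C (e.g. algC,
   or R[i] = complex R for a real closed field R such as the reals). *)
From HB Require Import structures.
From mathcomp Require Import all_boot all_order all_algebra.
From Stdlib Require Import ClassicalEpsilon.
Set Implicit Arguments. Unset Strict Implicit. Unset Printing Implicit Defensive.
Import Order.TTheory GRing.Theory Num.Theory.
Local Open Scope ring_scope.

Section M2.
Variable C : numClosedFieldType.
Local Notation M2 := 'M[C]_2.

Definition hadj (m n : nat) (A : 'M[C]_(m, n)) : 'M[C]_(n, m) :=
  (map_mx Num.conj A)^T.

Definition psd (A : M2) : Prop :=
  A = hadj A /\ forall v : 'cV[C]_2, 0 <= (hadj v *m A *m v) 0 0.

Definition unit_interval (a : M2) : Prop := psd a /\ psd (1%:M - a).

Definition msqrt (x : M2) : M2 :=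
  epsilon (inhabits 0) (fun p => psd p /\ p *m p = x).

Definition mabs (x : M2) : M2 := msqrt (hadj x *m x).

Definition jordan (a b : M2) : M2 := (2%:R)^-1 *: (a *m b + b *m a).

Definition abs_compat (a b : M2) : Prop :=
  mabs (a - b) + mabs (1%:M - a - b) = 1%:M.

Definition is_proj (p : M2) : Prop := p = hadj p /\ p *m p = p.

(* range projection: the projection whose range (column space) equals the
   range of x; column spaces are compared as row spaces of transposes. *)
Definition rproj (x : M2) : M2 :=
  epsilon (inhabits 0) (fun p => is_proj p /\ (p^T == x^T)%MS).

Definition sproj (a : M2) : M2 := 1%:M - rproj (1%:M - a).
Definition nproj (a : M2) : M2 := 1%:M - rproj a.

Definition strict (a : M2) : Prop := a != 0 /\ sproj a = 0 /\ nproj a = 0.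

End M2.

From mathcomp Require Import all_boot all_order all_algebra.
From mathcomp Require Import ring.
From Stdlib Require Import ClassicalEpsilon.
Set Implicit Arguments. Unset Strict Implicit. Unset Printing Implicit Defensive.
Import Order.TTheory GRing.Theory Num.Theory.
Local Open Scope ring_scope.

(* For 2x2 matrices Cayley-Hamilton reads x^2 = tr(x) x - det(x), so a
   positive square root P of h^2 with tr P <> 0 is an affine function
   k h + c of h.  Applied to |a - b| and |1 - a - b|, absolute compatibility
   becomes a relation between a, b and 1, which for non-commuting a, b forces
   the coefficients k to vanish, i.e. tr (a - b) = tr (1 - a - b) = 0, i.e.
   tr a = tr b = 1.  A traceless hermitian h satisfies h^2 = -det(h), so then
   |a - b| and |1 - a - b| are the scalars sqrt d1 and sqrt d2, with
   d1 = -det(a - b), d2 = -det(1 - a - b), d1 + d2 = 1 - 2 (det a + det b),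
   and absolute compatibility reads sqrt d1 + sqrt d2 = 1; for d1 + d2 < 1
   this is equivalent to (1 + d2 - d1)^2 = 4 d2, i.e. to det (a o b) = 0.
   Finally a is strict iff a and 1 - a are invertible, and
   det (1 - a) = det a when tr a = 1. *)

Section Mx2.
Variable C : numClosedFieldType.
Implicit Types (x y : C) (A B P X a b h : 'M[C]_2).

Lemma sum_ord2 (F : 'I_2 -> C) : \sum_(i < 2) F i = F 0 + F 1.
Proof. by rewrite big_ord_recl big_ord1; congr (_ + F _); apply: val_inj. Qed.

Lemma det_mx2 A : \det A = A 0 0 * A 1 1 - A 0 1 * A 1 0.
Proof.
rewrite (expand_det_row _ 0) sum_ord2 /cofactor !det_mx11 !mxE /=.
have -> : lift 0 (0 : 'I_1) = 1 :> 'I_2 by apply: val_inj.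
have -> : lift 1 (0 : 'I_1) = 0 :> 'I_2 by apply: val_inj.
rewrite expr0 expr1; ring.
Qed.

Lemma tr_mx2 A : \tr A = A 0 0 + A 1 1.
Proof. exact: sum_ord2. Qed.

Lemma mx2P A B :
  A 0 0 = B 0 0 -> A 0 1 = B 0 1 -> A 1 0 = B 1 0 -> A 1 1 = B 1 1 -> A = B.
Proof.
move=> e00 e01 e10 e11; apply/matrixP=> i j.
have ord2P (k : 'I_2) : k = 0 \/ k = 1.
  by case: k => [[|[|//]] ?]; [left | right]; apply: val_inj.
by case: (ord2P i) => ->; case: (ord2P j) => ->.
Qed.

Ltac mx2_entries := rewrite ?(mxE, sum_ord2, det_mx2, tr_mx2) /= ?mulr1n ?mulr0n.

Lemma sqr_mx2 A : A *m A = \tr A *: A - (\det A)%:M.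
Proof. apply: mx2P; mx2_entries; ring. Qed.

Lemma sqr_tr0 A : \tr A = 0 -> A *m A = (- \det A)%:M.
Proof. by move=> tr0; rewrite sqr_mx2 tr0 scale0r sub0r raddfN. Qed.

Lemma det_1m A : \det (1%:M - A) = 1 - \tr A + \det A.
Proof. by mx2_entries; ring. Qed.

Lemma tr1_mx2E A : \tr A = 1 -> A 1 1 = 1 - A 0 0.
Proof. by rewrite tr_mx2 => <-; rewrite addrAC subrr add0r. Qed.

Lemma hadjE m n (A : 'M[C]_(m, n)) i j : hadj A i j = (A j i)^*.
Proof. by rewrite !mxE. Qed.

Lemma hadjK m n (A : 'M[C]_(m, n)) : hadj (hadj A) = A.
Proof. by apply/matrixP=> i j; rewrite !hadjE conjCK. Qed.

Lemma hadj_mul m n p (A : 'M[C]_(m, n)) (B : 'M[C]_(n, p)) :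
  hadj (A *m B) = hadj B *m hadj A.
Proof. by rewrite /hadj map_mxM trmx_mul. Qed.

Lemma hadjD m n (A B : 'M[C]_(m, n)) : hadj (A + B) = hadj A + hadj B.
Proof. by apply/matrixP=> i j; rewrite !(hadjE, mxE) rmorphD. Qed.

Lemma hadjN m n (A : 'M[C]_(m, n)) : hadj (- A) = - hadj A.
Proof. by apply/matrixP=> i j; rewrite !(hadjE, mxE) rmorphN. Qed.

Lemma hadjZ m n x (A : 'M[C]_(m, n)) : hadj (x *: A) = x^* *: hadj A.
Proof. by apply/matrixP=> i j; rewrite !(hadjE, mxE) rmorphM. Qed.

Lemma hadj_scalar n x : hadj (x%:M : 'M[C]_n) = x^*%:M.
Proof. by apply/matrixP=> i j; rewrite !(hadjE, mxE) rmorphMn eq_sym. Qed.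

Lemma hadj1 n : hadj (1%:M : 'M[C]_n) = 1%:M.
Proof. by rewrite hadj_scalar conjC1. Qed.

Lemma hermitianB A B : A = hadj A -> B = hadj B -> A - B = hadj (A - B).
Proof. by move=> hA hB; rewrite hadjD hadjN -hA -hB. Qed.

Lemma hermitian2E A : A = hadj A ->
  [/\ (A 0 0)^* = A 0 0, (A 1 1)^* = A 1 1 & A 1 0 = (A 0 1)^*].
Proof.
move=> eA; have e i j : A i j = (A j i)^* by rewrite {1}eA hadjE.
by rewrite -!e.
Qed.

Lemma psd_form2 A x y : psd A ->
  0 <= x^* * (A 0 0 * x + A 0 1 * y) + y^* * (A 1 0 * x + A 1 1 * y).
Proof.
case=> _ /(_ (\col_i (if i == 0 then x else y))); mx2_entries.
by congr (0 <= _); ring.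
Qed.

Lemma psd_diag_ge0 A : psd A -> 0 <= A 0 0 /\ 0 <= A 1 1.
Proof.
move=> pA; split.
  by have := psd_form2 1 0 pA; rewrite conjC1 conjC0 !(mulr0, mul0r, addr0) mul1r mulr1.
by have := psd_form2 0 1 pA; rewrite conjC1 conjC0 !(mulr0, mul0r, add0r) mul1r mulr1.
Qed.

Lemma psd_tr_eq0 A : psd A -> \tr A = 0 -> A = 0.
Proof.
move=> pA; have [a00_ge0 a11_ge0] := psd_diag_ge0 pA.
have [_ _ a10E] := hermitian2E pA.1.
rewrite tr_mx2 => /eqP; rewrite paddr_eq0 // => /andP[/eqP a00 /eqP a11].
have : 0 <= - (2%:R * (A 0 1 * (A 0 1)^*)).
  have := psd_form2 1 (- (A 0 1)^*) pA; rewrite a00 a11 a10E.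
  by congr (0 <= _); rewrite rmorphN /= conjCK conjC1; ring.
rewrite oppr_ge0 pmulr_rle0 ?ltr0n // => a01_le0.
have /eqP : A 0 1 * (A 0 1)^* = 0 by apply: le_anti; rewrite a01_le0 mul_conjC_ge0.
rewrite mul_conjC_eq0 => /eqP a01.
by apply: mx2P; rewrite mxE ?a00 ?a11 ?a10E ?a01 ?conjC0.
Qed.

Lemma psd_det_ge0 A : psd A -> 0 <= \det A.
Proof.
move=> pA; have [a00_ge0 a11_ge0] := psd_diag_ge0 pA.
have [a00E a11E _] := hermitian2E pA.1.
have h0 : 0 <= A 0 0 * \det A.
  have := psd_form2 (- A 0 1) (A 0 0) pA; rewrite a00E det_mx2.
  by congr (0 <= _); ring.
have h1 : 0 <= A 1 1 * \det A.
  have := psd_form2 (A 1 1) (- A 1 0) pA; rewrite a11E det_mx2.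
  by congr (0 <= _); ring.
have [tr0|trn0] := eqVneq (\tr A) 0; first by rewrite (psd_tr_eq0 pA tr0) det0.
have tr_gt0 : 0 < \tr A by rewrite lt_def trn0 tr_mx2 addr_ge0.
by rewrite -(pmulr_rge0 _ tr_gt0) tr_mx2 mulrDl addr_ge0.
Qed.

Lemma psd_det_gt0 A : psd A -> (0 < \det A) = (A \in unitmx).
Proof. by move=> pA; rewrite unitmxE unitfE lt_def psd_det_ge0 // andbT. Qed.

Lemma psdD A B : psd A -> psd B -> psd (A + B).
Proof.
move=> [hA fA] [hB fB]; split; first by rewrite hadjD -hA -hB.
by move=> v; rewrite mulmxDr mulmxDl mxE addr_ge0.
Qed.

Lemma psdZ x A : 0 <= x -> psd A -> psd (x *: A).
Proof.
move=> x_ge0 [hA fA]; split; first by rewrite hadjZ geC0_conj -?hA.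
by move=> v; rewrite -scalemxAr -scalemxAl mxE mulr_ge0.
Qed.

Lemma psd_gram h : psd (hadj h *m h).
Proof.
split=> [|v]; first by rewrite hadj_mul hadjK.
rewrite -mulmxA -mulmxA mulmxA -hadj_mul mxE.
by apply: sumr_ge0 => k _; rewrite hadjE mulrC mul_conjC_ge0.
Qed.

Lemma gram_eq0 m n (A : 'M[C]_(m, n)) : hadj A *m A = 0 -> A = 0.
Proof.
move=> AA0; apply/matrixP=> i j; move/matrixP/(_ j j)/eqP: AA0.
rewrite !mxE psumr_eq0 => [/allP/(_ i (mem_index_enum _))|k _]; last first.
  by rewrite hadjE mulrC mul_conjC_ge0.
by rewrite hadjE mulrC mul_conjC_eq0 => /eqP.
Qed.

Lemma psd_scalar x : 0 <= x -> psd (x%:M : 'M[C]_2).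
Proof. by move=> x_ge0; have := psdZ x_ge0 (psd_gram 1); rewrite hadj1 mul1mx scalemx1. Qed.

Lemma psd_sqrt_exists X : psd X -> exists2 P, psd P & P *m P = X.
Proof.
move=> pX; set s := sqrtC (\det X); set t := sqrtC (\tr X + 2%:R * s).
have s_ge0 : 0 <= s by rewrite sqrtC_ge0 psd_det_ge0.
have tr_ge0 : 0 <= \tr X by have [? ?] := psd_diag_ge0 pX; rewrite tr_mx2 addr_ge0.
have sq : (X + s%:M) *m (X + s%:M) = t ^+ 2 *: X.
  rewrite mulmxDl !mulmxDr sqr_mx2 mul_mx_scalar mul_scalar_mx -scalar_mxM -expr2.
  by rewrite !sqrtCK; apply/matrixP=> i j; rewrite !mxE; ring.
have [t0|t_neq0] := eqVneq t 0.
  have : \tr X + 2%:R * s = 0 by rewrite -[LHS]sqrtCK -/t t0 expr0n.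
  move/eqP; rewrite paddr_eq0 ?mulr_ge0 ?ler0n // => /andP[/eqP /(psd_tr_eq0 pX) -> _].
  by exists 0; rewrite ?mul0mx //; have := psdZ (lexx 0) pX; rewrite scale0r.
exists (t^-1 *: (X + s%:M)).
  apply: psdZ (psdD pX (psd_scalar s_ge0)).
  by rewrite invr_ge0 sqrtC_ge0 addr_ge0 ?mulr_ge0 ?ler0n.
by rewrite -scalemxAl -scalemxAr sq !scalerA expr2 mulrACA mulVf // mulr1 scale1r.
Qed.

Lemma mabsP h : psd (mabs h) /\ mabs h *m mabs h = hadj h *m h.
Proof.
apply: (epsilon_spec _ (fun P => psd P /\ P *m P = hadj h *m h)).
by have [P pP sq] := psd_sqrt_exists (psd_gram h); exists P.
Qed.

Lemma hermitian_tr0_detN_ge0 h : h = hadj h -> \tr h = 0 -> 0 <= - \det h.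
Proof.
move=> hh; have [_ h11E h10E] := hermitian2E hh.
rewrite tr_mx2 => /eqP; rewrite addr_eq0 => /eqP h00E.
have -> : - \det h = h 1 1 * (h 1 1)^* + h 0 1 * (h 0 1)^*.
  by rewrite det_mx2 h00E h10E h11E; ring.
by rewrite addr_ge0 ?mul_conjC_ge0.
Qed.

Lemma sqr_eq_affine P h : \tr P != 0 -> P *m P = h *m h ->
  P = (\tr h / \tr P) *: h + ((\det P - \det h) / \tr P)%:M.
Proof.
move=> trP_neq0; rewrite !sqr_mx2 => e.
have e' : \tr P *: P = \tr h *: h + (\det P - \det h)%:M.
  by rewrite raddfB /= addrA addrAC -e subrK.
rewrite -{1}(scalerK trP_neq0 P) e' scalerDr scalerA scale_scalar_mx.
by rewrite ![_^-1 * _]mulrC.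
Qed.

Lemma psd_sqrt_scalar P x : psd P -> 0 <= x -> P *m P = (x ^+ 2)%:M -> P = x%:M.
Proof.
move=> pP x_ge0 sq; have [trP0|trP_neq0] := eqVneq (\tr P) 0.
  move: sq; rewrite (psd_tr_eq0 pP trP0) mul0mx => /matrixP/(_ 0 0).
  by rewrite !mxE /= mulr1n => /esym/eqP; rewrite expf_eq0 /= => /eqP->; rewrite raddf0.
move: (sq); rewrite expr2 scalar_mxM => /(sqr_eq_affine trP_neq0).
rewrite scale_scalar_mx -raddfD /=; set y := _ + _ => Py.
have y_ge0 : 0 <= y by have [+ _] := psd_diag_ge0 pP; rewrite Py mxE.
move: sq; rewrite Py -scalar_mxM => /matrixP/(_ 0 0); rewrite !mxE /= !mulr1n.
by move=> /eqP; rewrite -expr2 eqrXn2 // => /eqP->.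
Qed.

Lemma mabs_tr0 h : h = hadj h -> \tr h = 0 -> mabs h = (sqrtC (- \det h))%:M.
Proof.
move=> hh tr0; have [pP sq] := mabsP h.
apply: psd_sqrt_scalar; rewrite ?sqrtC_ge0 ?hermitian_tr0_detN_ge0 //.
by rewrite sqrtCK sq -hh sqr_tr0.
Qed.

Lemma rproj_spec X : psd X -> is_proj (rproj X) /\ ((rproj X)^T == X^T)%MS.
Proof.
move=> pX; apply: (epsilon_spec _ (fun p => is_proj p /\ (p^T == X^T)%MS)).
have [Xu|] := boolP (X \in unitmx).
  exists 1%:M; split; first by split; rewrite ?hadj1 ?mul1mx.
  by apply/andP; split; apply: submx_full; rewrite row_full_unit unitmx_tr ?unitmx1.
rewrite unitmxE unitfE negbK => /eqP det0.
have [->|X_neq0] := eqVneq X 0.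
  exists 0; split; last by rewrite submx_refl.
  by split; [apply/matrixP=> i j; rewrite !mxE conjC0 | rewrite mul0mx].
(* A singular nonzero positive X has rank one, so X / tr X is a projection
   with the same range. *)
have tr_gt0 : 0 < \tr X.
  have [? ?] := psd_diag_ge0 pX; rewrite lt_def tr_mx2 addr_ge0 // andbT -tr_mx2.
  by apply: contra_neq X_neq0; apply: psd_tr_eq0.
exists ((\tr X)^-1 *: X); split.
  split; first by rewrite hadjZ -pX.1 geC0_conj // invr_ge0 ltW.
  rewrite -scalemxAl -scalemxAr sqr_mx2 det0 raddf0 subr0 !scalerA.
  by rewrite -mulrA mulVf ?mulr1 // gt_eqF.
by rewrite linearZ /=; apply/eqmxP; apply: eqmx_scale; rewrite invr_eq0 gt_eqF.
Qed.

Lemma rproj_eq1 X : psd X -> rproj X = 1%:M <-> X \in unitmx.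
Proof.
move=> pX; have [[_ pp] eqp] := rproj_spec pX.
rewrite -unitmx_tr -row_full_unit -(eq_row_full (eqmxP eqp)).
split=> [->|]; first by rewrite trmx1 row_full_unit unitmx1.
rewrite row_full_unit unitmx_tr => pu.
by have := mulKmx pu (rproj X); rewrite pp mulVmx.
Qed.

Lemma strict_unitmx a : unit_interval a ->
  strict a <-> [/\ a != 0, a \in unitmx & 1%:M - a \in unitmx].
Proof.
move=> [pa pa'].
have proj_compl X : psd X -> 1%:M - rproj X = 0 <-> X \in unitmx.
  move=> pX; rewrite -(rproj_eq1 pX).
  by split=> [/eqP|->]; [rewrite subr_eq0 => /eqP<- | exact: subrr].
rewrite /strict /sproj /nproj (proj_compl _ pa) (proj_compl _ pa').
by split=> [[? [? ?]] | [? ? ?]].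
Qed.

Lemma noncomm_lin_indep n (a b : 'M[C]_n) x y z :
  x *: a + y *: b = z%:M -> a *m b != b *m a -> x = 0 /\ y = 0.
Proof.
move=> e nc.
have scale_eq0 c : c *: (a *m b) = c *: (b *m a) -> c = 0.
  move=> ec; apply/eqP; apply: contraNT nc => c_neq0; apply/eqP.
  by rewrite -(scalerK c_neq0 (a *m b)) ec scalerK.
split; apply: scale_eq0.
  have : (x *: a + y *: b) *m b = b *m (x *: a + y *: b).
    by rewrite e mul_scalar_mx mul_mx_scalar.
  by rewrite mulmxDl mulmxDr -!scalemxAl -!scalemxAr => /addIr.
have : a *m (x *: a + y *: b) = (x *: a + y *: b) *m a.
  by rewrite e mul_scalar_mx mul_mx_scalar.
by rewrite mulmxDl mulmxDr -!scalemxAl -!scalemxAr => /addrI.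
Qed.

Lemma mabs_affine h : h = hadj h -> h != 0 ->
  exists k c, mabs h = k *: h + c%:M /\ (k = 0 -> \tr h = 0).
Proof.
move=> hh h_neq0; have [pP sq] := mabsP h; rewrite -hh in sq.
have trP_neq0 : \tr (mabs h) != 0.
  apply: contra_neq h_neq0 => /(psd_tr_eq0 pP) P0.
  by apply: gram_eq0; rewrite -hh -sq P0 mul0mx.
exists (\tr h / \tr (mabs h)), ((\det (mabs h) - \det h) / \tr (mabs h)).
split; first exact: sqr_eq_affine.
by move/eqP; rewrite mulf_eq0 invr_eq0 (negbTE trP_neq0) orbF => /eqP.
Qed.

Lemma tr_sub_eq0 a b :
  \tr (a - b) = 0 /\ \tr (1%:M - a - b) = 0 <-> \tr a = 1 /\ \tr b = 1.
Proof.
rewrite !raddfB /= mxtrace1; split=> [[/subr0_eq tab] | [-> ->]]; last first.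
  by rewrite subrr; split=> //; ring.
rewrite tab -addrA -opprD => /subr0_eq /eqP; rewrite -mulr2n eqr_pMn2r // => /eqP tb.
by rewrite -tb.
Qed.

Lemma abs_compat_tr a b : a = hadj a -> b = hadj b ->
  abs_compat a b -> a *m b != b *m a -> \tr a = 1 /\ \tr b = 1.
Proof.
move=> ha hb ac nc.
have h1_neq0 : a - b != 0 by apply: contraNneq nc => /subr0_eq ->.
have h2_neq0 : 1%:M - a - b != 0.
  by apply: contraNneq nc => /subr0_eq <-; rewrite mulmxBr mulmxBl mulmx1 mul1mx.
have [k1 [c1 [E1 K1]]] := mabs_affine (hermitianB ha hb) h1_neq0.
have [k2 [c2 [E2 K2]]] := mabs_affine (hermitianB (hermitianB (esym (hadj1 _)) ha) hb) h2_neq0.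
have [k12 k21] : k1 - k2 = 0 /\ - (k1 + k2) = 0.
  apply: (noncomm_lin_indep (z := 1 - c1 - c2 - k2)) nc.
  move: ac; rewrite /abs_compat E1 E2 => /matrixP ac; apply/matrixP=> i j.
  by move: (ac i j); rewrite !mxE !mulrnBl => <-; ring.
have k2_0 : k2 = 0.
  by apply/eqP; move/eqP: k21; rewrite (subr0_eq k12) oppr_eq0 -mulr2n mulrn_eq0.
apply/tr_sub_eq0; split; [apply: K1 | exact: K2 k2_0].
by rewrite (subr0_eq k12).
Qed.

Lemma sqrtC_add_eq1 x y : 0 <= x -> 0 <= y -> x + y < 1 ->
  sqrtC x + sqrtC y = 1 <-> (1 + y - x) ^+ 2 - 4%:R * y = 0.
Proof.
move=> x_ge0 y_ge0 xy_lt1; set s := sqrtC y.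
have s_ge0 : 0 <= s by rewrite sqrtC_ge0.
have yE : y = s ^+ 2 by rewrite sqrtCK.
split=> [sxs|].
  have -> : x = (1 - s) ^+ 2 by rewrite -sxs addrK sqrtCK.
  by rewrite yE; ring.
have -> : (1 + y - x) ^+ 2 - 4%:R * y = (1 + s ^+ 2 - x) ^+ 2 - (2%:R * s) ^+ 2.
  by rewrite yE; ring.
move/subr0_eq/eqP; rewrite eqf_sqr => /orP[] /eqP e.
  have s_le1 : s <= 1.
    rewrite -(expr_le1 (n := 2)) // -yE ltW // (le_lt_trans _ xy_lt1) //.
    by rewrite lerDr.
  have -> : x = (1 - s) ^+ 2 by rewrite -[x](subKr (1 + s ^+ 2)) e; ring.
  by rewrite sqrCK ?subrK // subr_ge0.
have x_ge1 : 1 <= x.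
  rewrite -[x](subKr (1 + s ^+ 2)) e opprK -addrA lerDl.
  by rewrite addr_ge0 ?mulr_ge0 ?exprn_ge0 ?ler0n.
have x_le_xy : x <= x + y by rewrite lerDl.
by have := le_lt_trans x_ge1 (le_lt_trans x_le_xy xy_lt1); rewrite ltxx.
Qed.

Lemma detN_sum_tr1 a b : \tr a = 1 -> \tr b = 1 ->
  - \det (a - b) + - \det (1%:M - a - b) = 1 - 2%:R * (\det a + \det b).
Proof.
by move=> ta tb; mx2_entries; rewrite (tr1_mx2E ta) (tr1_mx2E tb); ring.
Qed.

Lemma det_jordan_tr1 a b : \tr a = 1 -> \tr b = 1 ->
  \det (jordan a b) = 16%:R^-1 *
    ((1 + - \det (1%:M - a - b) - - \det (a - b)) ^+ 2 - 4%:R * - \det (1%:M - a - b)).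
Proof.
move=> ta tb; rewrite /jordan; mx2_entries; rewrite (tr1_mx2E ta) (tr1_mx2E tb).
by field; rewrite ?pnatr_eq0.
Qed.

Lemma jordan_comm a b : a *m b = b *m a -> jordan a b = a *m b.
Proof.
by rewrite /jordan => ->; rewrite -mulr2n -scaler_nat scalerA mulVf ?pnatr_eq0 ?scale1r.
Qed.

Lemma abs_compat_tr1 a b : a = hadj a -> b = hadj b -> \tr a = 1 -> \tr b = 1 ->
  0 < \det a + \det b -> abs_compat a b <-> \det (jordan a b) = 0.
Proof.
move=> ha hb ta tb dab_gt0.
have [tr1 tr2] := proj2 (tr_sub_eq0 a b) (conj ta tb).
have h1 := hermitianB ha hb.
have h2 := hermitianB (hermitianB (esym (hadj1 _)) ha) hb.
rewrite /abs_compat !mabs_tr0 // -raddfD /=.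
transitivity (sqrtC (- \det (a - b)) + sqrtC (- \det (1%:M - a - b)) = 1).
  by split=> [/matrixP/(_ 0 0)|->]; rewrite ?mxE.
rewrite sqrtC_add_eq1 ?hermitian_tr0_detN_ge0 //; last first.
  by rewrite detN_sum_tr1 // ltrBlDr ltrDl mulr_gt0 ?ltr0n.
rewrite det_jordan_tr1 //; split=> [->|/eqP]; first by rewrite mulr0.
by rewrite mulf_eq0 invr_eq0 pnatr_eq0 => /eqP.
Qed.

End Mx2.

Theorem theorem3p3 (C : numClosedFieldType) (a b : 'M[C]_2) :
  unit_interval a -> unit_interval b ->
  a != 0 -> a != 1%:M -> b != 0 -> b != 1%:M ->
  (strict a /\ strict b /\ abs_compat a b /\ a *m b != b *m a) <->
  ((0 < \det a /\ 0 < \det b) /\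
   (\tr a = 1 /\ \tr b = 1) /\
   \det (jordan a b) = 0).
Proof.
(* [a != 1%:M] and [b != 1%:M] follow from either side of the equivalence. *)
move=> ua ub a_neq0 _ b_neq0 _; have [[pa _] [pb _]] := (ua, ub).
have [ha hb] := (pa.1, pb.1).
split=> [[/(strict_unitmx ua) [_ a_unit _] [/(strict_unitmx ub) [_ b_unit _] [ac nc]]]|].
  have [ta tb] := abs_compat_tr ha hb ac nc.
  have da : 0 < \det a by rewrite psd_det_gt0.
  have db : 0 < \det b by rewrite psd_det_gt0.
  by do !split=> //; apply/(abs_compat_tr1 ha hb ta tb); rewrite ?addr_gt0.
move=> [[da db] [[ta tb] dj]].
have strict_tr1 x : unit_interval x -> x != 0 -> 0 < \det x -> \tr x = 1 -> strict x.
  move=> [px px'] x_neq0 dx tx; apply/strict_unitmx => //; split=> //.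
    by rewrite -psd_det_gt0.
  by rewrite -psd_det_gt0 // det_1m tx subrr add0r.
split; first exact: strict_tr1.
split; first exact: strict_tr1.
split; first by apply/(abs_compat_tr1 ha hb ta tb); rewrite ?addr_gt0.
apply: contra_eqN dj => /eqP/jordan_comm->.
by rewrite det_mulmx mulf_neq0 ?gt_eqF.
Qed.
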